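(* Let $p,q\geq 2$ be relatively prime integers. Then $\mathrm{real}_{pq}(G_{p,q}(\mathrm{config}_{pq}(\xi)))=p\xi$ for all real $\xi\geq 0$.
   Context: For an integer $n>1$, $A_n=\{0,1,\dots,n-1\}$. For real $\xi\geq0$, let $\xi=\sum_{i\in\mathbb{Z}}\xi_i n^i$ be the unique base-$n$ expansion with $\xi_i\in A_n$ and $\xi_i\neq n-1$ for infinitely many $i<0$; define $\mathrm{config}_n(\xi)\in A_n^{\mathbb{Z}}$ by $\mathrm{config}_n(\xi)(i)=\xi_{-i}$. For $c\in A_n^{\mathbb{Z}}$ with $c(i)=0$ for all sufficiently small $i$, $\mathrm{real}_n(c)=\sum_{i\in\mathbb{Z}}c(-i)n^i$. Define $g_{p,q}:A_{pq}\times A_{pq}\to A_{pq}$ by writing $x=x_1q+x_0$, $y=y_1q+y_0$ with $x_0,y_0\in A_q$, $x_1,y_1\in A_p$ (uniquely), and setting $g_{p,q}(x,y)=x_0p+y_1$; and $G_{p,q}:A_{pq}^{\mathbb{Z}}\to A_{pq}^{\mathbb{Z}}$ by $G_{p,q}(c)(i)=g_{p,q}(c(i),c(i+1))$. *)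

From Stdlib Require Import Reals Lra Lia ZArith Arith ClassicalEpsilon.
From Coquelicot Require Import Coquelicot.
Open Scope R_scope.

Definition zsum (a : Z -> R) (M : nat) : R :=
  sum_f_R0 (fun k => a (Z.of_nat k - Z.of_nat M)%Z) (2 * M).

Definition digit_terms (n : nat) (d : Z -> nat) (i : Z) : R :=
  INR (d i) * powerRZ (INR n) i.

Definition is_expansion (n : nat) (xi : R) (d : Z -> nat) : Prop :=
  (forall i, (d i < n)%nat) /\
  (forall N : Z, exists i : Z, (i < N)%Z /\ (i < 0)%Z /\ d i <> (n - 1)%nat) /\
  is_lim_seq (zsum (digit_terms n d)) xi.

Definition digits (n : nat) (xi : R) : Z -> nat :=
  epsilon (inhabits (fun _ : Z => 0%nat)) (is_expansion n xi).

Definition config (n : nat) (xi : R) : Z -> nat :=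
  fun i => digits n xi (- i)%Z.

Definition real_n (n : nat) (c : Z -> nat) : R :=
  real (Lim_seq (zsum (digit_terms n (fun i => c (- i)%Z)))).

Definition g (p q : nat) (x y : nat) : nat :=
  (x mod q) * p + y / q.

Definition G (p q : nat) (c : Z -> nat) : Z -> nat :=
  fun i => g p q (c i) (c (i + 1)%Z).

(** Write each base-[n] digit, [n = p q], as [d_i = q h_i + l_i] with
    [h_i = d_i / q] and [l_i = d_i mod q].  The [i]-th digit of
    [G (config xi)] is [p l_i + h_(i-1)], so its series differs from
    [p * sum_i d_i n^i] by [n * sum_i (h_(i-1) n^(i-1) - h_i n^i)], which
    telescopes to boundary terms bounded by terms of the convergent series of
    [xi]; these tend to [0].  The
    expansion itself exists because the greedy digits
    [floor (xi n^-i) - n floor (xi n^(-i-1))] work. *)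

From Stdlib Require Import Reals Lra Lia ZArith Arith ClassicalEpsilon.
From Coquelicot Require Import Coquelicot.
Open Scope R_scope.

Lemma zsum_S (a : Z -> R) (M : nat) :
  zsum a (S M) = a (- Z.of_nat M - 1)%Z + zsum a M + a (Z.of_nat M + 1)%Z.
Proof.
  unfold zsum.
  replace (2 * S M)%nat with (S (S (2 * M))) by lia.
  rewrite tech5, decomp_sum by lia; simpl pred.
  replace (Z.of_nat 0 - Z.of_nat (S M))%Z with (- Z.of_nat M - 1)%Z by lia.
  replace (Z.of_nat (S (S (2 * M))) - Z.of_nat (S M))%Z
    with (Z.of_nat M + 1)%Z by lia.
  f_equal; f_equal; apply sum_eq; intros i _; f_equal; lia.
Qed.

Lemma zsum_ext (a b : Z -> R) (M : nat) :
  (forall i, a i = b i) -> zsum a M = zsum b M.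
Proof. intros Hab; apply sum_eq; intros; apply Hab. Qed.

Lemma zsum_plus (a b : Z -> R) (M : nat) :
  zsum (fun i => a i + b i) M = zsum a M + zsum b M.
Proof. apply plus_sum. Qed.

Lemma zsum_scal (c : R) (a : Z -> R) (M : nat) :
  zsum (fun i => c * a i) M = c * zsum a M.
Proof.
  unfold zsum; rewrite scal_sum; apply sum_eq; intros; ring.
Qed.

Lemma zsum_telescope (a h : Z -> R) (M : nat) :
  (forall i, a i = h i - h (i + 1)%Z) ->
  zsum a M = h (- Z.of_nat M)%Z - h (Z.of_nat M + 1)%Z.
Proof.
  intros Ha; rewrite (zsum_ext _ _ _ Ha); clear Ha.
  induction M as [|M IH]; [unfold zsum; simpl; ring|].
  rewrite zsum_S, IH.
  replace (- Z.of_nat M - 1 + 1)%Z with (- Z.of_nat M)%Z by lia.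
  replace (- Z.of_nat (S M))%Z with (- Z.of_nat M - 1)%Z by lia.
  replace (Z.of_nat (S M) + 1)%Z with (Z.of_nat M + 1 + 1)%Z by lia.
  ring.
Qed.

Lemma is_lim_seq_squeeze_0 (u v : nat -> R) :
  (forall k, 0 <= u k <= v k) -> is_lim_seq v 0 -> is_lim_seq u 0.
Proof.
  intros Huv Hv; apply (is_lim_seq_le_le (fun _ => 0) u v); auto.
  apply is_lim_seq_const.
Qed.

(** The two new terms of [zsum a (S M)] are the increment of a convergent
    sequence. *)
Lemma zsum_cvg_terms_vanish (a : Z -> R) (l : R) :
  (forall i, 0 <= a i) -> is_lim_seq (zsum a) l ->
  is_lim_seq (fun M => a (- Z.of_nat M - 1)%Z) 0 /\
  is_lim_seq (fun M => a (Z.of_nat M)) 0.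
Proof.
  intros Ha Hl.
  assert (Hinc : is_lim_seq (fun M => zsum a (S M) - zsum a M) 0).
  { replace 0 with (l - l) by ring.
    apply is_lim_seq_minus'; [apply (is_lim_seq_incr_1 (zsum a))|]; exact Hl. }
  split.
  - refine (is_lim_seq_squeeze_0 _ _ _ Hinc); intros M; split; [apply Ha|].
    rewrite zsum_S; specialize (Ha (Z.of_nat M + 1)%Z); lra.
  - apply is_lim_seq_incr_1; refine (is_lim_seq_squeeze_0 _ _ _ Hinc).
    intros M; split; [apply Ha|].
    rewrite zsum_S, Nat2Z.inj_succ, <- Z.add_1_r.
    specialize (Ha (- Z.of_nat M - 1)%Z); lra.
Qed.

Lemma Int_part_greatest (z : Z) (r : R) : IZR z <= r -> (z <= Int_part r)%Z.
Proof.
  intros Hz; destruct (base_Int_part r) as [_ Hr].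
  assert (Hlt : IZR z < IZR (Int_part r + 1)) by (rewrite plus_IZR; lra).
  apply lt_IZR in Hlt; lia.
Qed.

Lemma Int_part_mul_sub_bounds (n : nat) (y : R) : (0 < n)%nat ->
  (0 <= Int_part (y * INR n) - Z.of_nat n * Int_part y <= Z.of_nat n - 1)%Z.
Proof.
  intros hn; assert (hb : 1 <= INR n) by (apply (le_INR 1); lia).
  destruct (base_Int_part y) as [Hy1 Hy2].
  destruct (base_Int_part (y * INR n)) as [Hyn _].
  split.
  - enough (Z.of_nat n * Int_part y <= Int_part (y * INR n))%Z by lia.
    apply Int_part_greatest; rewrite mult_IZR, <- INR_IZR_INZ; nra.
  - enough (Int_part (y * INR n) < Z.of_nat n * (Int_part y + 1))%Z by lia.
    apply lt_IZR; rewrite mult_IZR, plus_IZR, <- INR_IZR_INZ; nra.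
Qed.

Lemma pow_unbounded (b y : R) : 1 < b ->
  exists N, forall m, (N <= m)%nat -> y < b ^ m.
Proof.
  intros hb; exact (proj2 (is_lim_seq_spec _ _) (is_lim_seq_geom_p b hb) y).
Qed.

Lemma Int_part_div_pow_cvg (b xi : R) : 1 < b ->
  is_lim_seq (fun m => IZR (Int_part (xi * b ^ m)) / b ^ m) xi.
Proof.
  intros hb.
  assert (Hinv : is_lim_seq (fun m => / b ^ m) 0).
  { apply (is_lim_seq_inv _ p_infty); [apply is_lim_seq_geom_p; lra|easy]. }
  apply (is_lim_seq_le_le (fun m => xi - / b ^ m) _ (fun _ => xi)).
  - intros m; assert (0 < b ^ m) by (apply pow_lt; lra).
    destruct (base_Int_part (xi * b ^ m)) as [H1 H2].
    unfold Rdiv; split.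
    + apply (Rmult_le_reg_r (b ^ m)); [lra|].
      rewrite Rmult_minus_distr_r, !Rmult_assoc, Rinv_l; lra.
    + apply (Rmult_le_reg_r (b ^ m)); [lra|].
      rewrite !Rmult_assoc, Rinv_l; lra.
  - replace (Finite xi) with (Finite (xi - 0)) by (f_equal; ring).
    apply is_lim_seq_minus'; [apply is_lim_seq_const|exact Hinv].
  - apply is_lim_seq_const.
Qed.

Definition scaled_floor (n : nat) (xi : R) (k : Z) : Z :=
  Int_part (xi * powerRZ (INR n) k).

Definition greedy_digits (n : nat) (xi : R) (i : Z) : nat :=
  Z.to_nat (scaled_floor n xi (- i) - Z.of_nat n * scaled_floor n xi (- i - 1)).

Section GreedyDigits.

Variables (n : nat) (xi : R).
Hypothesis hn : (2 <= n)%nat.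

Let hb : 2 <= INR n.
Proof. apply (le_INR 2); exact hn. Qed.

Lemma scaled_floor_mul_sub_bounds (k : Z) :
  (0 <= scaled_floor n xi (k + 1) - Z.of_nat n * scaled_floor n xi k
     <= Z.of_nat n - 1)%Z.
Proof.
  unfold scaled_floor.
  replace (xi * powerRZ (INR n) (k + 1)) with (xi * powerRZ (INR n) k * INR n)
    by (rewrite powerRZ_add by lra; simpl; ring).
  apply Int_part_mul_sub_bounds; lia.
Qed.

Lemma greedy_digits_INR (i : Z) :
  INR (greedy_digits n xi i) =
  IZR (scaled_floor n xi (- i)) - INR n * IZR (scaled_floor n xi (- i - 1)).
Proof.
  pose proof (scaled_floor_mul_sub_bounds (- i - 1)) as Hbd.
  replace (- i - 1 + 1)%Z with (- i)%Z in Hbd by lia.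
  unfold greedy_digits; rewrite INR_IZR_INZ, Z2Nat.id by lia.
  rewrite minus_IZR, mult_IZR, <- INR_IZR_INZ; reflexivity.
Qed.

Lemma greedy_digits_lt (i : Z) : (greedy_digits n xi i < n)%nat.
Proof.
  pose proof (scaled_floor_mul_sub_bounds (- i - 1)) as Hbd.
  replace (- i - 1 + 1)%Z with (- i)%Z in Hbd by lia.
  unfold greedy_digits; lia.
Qed.

Lemma scaled_floor_succ_of_max_digit (k : Z) :
  greedy_digits n xi (- k - 1) = (n - 1)%nat ->
  IZR (scaled_floor n xi (k + 1)) + 1 = INR n * (IZR (scaled_floor n xi k) + 1).
Proof.
  intros Hmax; pose proof (greedy_digits_INR (- k - 1)) as Hd.
  rewrite Hmax, minus_INR in Hd by lia.
  replace (- (- k - 1) - 1)%Z with k in Hd by lia.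
  replace (- (- k - 1))%Z with (k + 1)%Z in Hd by lia.
  simpl in Hd; lra.
Qed.

(** A run of maximal digits below position [-K] would force
    [floor (xi n^(K+j)) + 1 = n^j (floor (xi n^K) + 1)], which eventually
    exceeds [xi n^(K+j) + 1]. *)
Lemma greedy_digits_not_eventually_max (N : Z) :
  exists i, (i < N)%Z /\ (i < 0)%Z /\ greedy_digits n xi i <> (n - 1)%nat.
Proof.
  apply NNPP; intros Hno.
  set (K := Z.abs N).
  assert (HK : (0 <= K /\ - N <= K)%Z) by (unfold K; lia).
  assert (Hrun : forall j : nat, IZR (scaled_floor n xi (K + Z.of_nat j)) + 1 =
                                 INR n ^ j * (IZR (scaled_floor n xi K) + 1)).
  { induction j as [|j IH]; [rewrite Z.add_0_r; simpl; ring|].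
    rewrite Nat2Z.inj_succ, <- Z.add_1_r, Z.add_assoc.
    rewrite scaled_floor_succ_of_max_digit, IH; [simpl; ring|].
    apply NNPP; intros Hj; apply Hno; exists (- (K + Z.of_nat j) - 1)%Z.
    split; [lia|split; [lia|exact Hj]]. }
  set (delta := IZR (scaled_floor n xi K) + 1 - xi * powerRZ (INR n) K).
  assert (Hdelta : 0 < delta).
  { unfold delta, scaled_floor; destruct (base_Int_part (xi * powerRZ (INR n) K)); lra. }
  destruct (pow_unbounded (INR n) (/ delta)) as [m Hm]; [lra|].
  specialize (Hm m (Nat.le_refl m)).
  destruct (base_Int_part (xi * powerRZ (INR n) (K + Z.of_nat m))) as [Hfl _].
  fold (scaled_floor n xi (K + Z.of_nat m)) in Hfl.
  rewrite powerRZ_add, <- pow_powerRZ in Hfl by lra.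
  assert (INR n ^ m * delta <= 1) by (unfold delta; specialize (Hrun m); nra).
  apply (Rmult_lt_compat_r delta) in Hm; [|exact Hdelta].
  rewrite Rinv_l in Hm; lra.
Qed.

Lemma greedy_digit_terms (i : Z) :
  digit_terms n (greedy_digits n xi) i =
  IZR (scaled_floor n xi (- i)) * powerRZ (INR n) i -
  IZR (scaled_floor n xi (- (i + 1))) * powerRZ (INR n) (i + 1).
Proof.
  unfold digit_terms; rewrite greedy_digits_INR, powerRZ_add by lra.
  replace (- (i + 1))%Z with (- i - 1)%Z by lia.
  simpl; ring.
Qed.

Lemma greedy_digits_series_cvg :
  0 <= xi -> is_lim_seq (zsum (digit_terms n (greedy_digits n xi))) xi.
Proof.
  intros hxi.
  apply (is_lim_seq_ext (fun M =>
    IZR (Int_part (xi * INR n ^ M)) / INR n ^ M -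
    IZR (scaled_floor n xi (- (Z.of_nat M + 1))) * powerRZ (INR n) (Z.of_nat M + 1))).
  { intros M; rewrite (zsum_telescope _ _ _ greedy_digit_terms).
    unfold scaled_floor.
    rewrite Z.opp_involutive, (powerRZ_neg' _ (Z.of_nat M)), <- pow_powerRZ.
    reflexivity. }
  replace (Finite xi) with (Finite (xi - 0)) by (f_equal; ring).
  apply is_lim_seq_minus'; [apply Int_part_div_pow_cvg; lra|].
  apply (is_lim_seq_ext_loc (fun _ => 0)); [|apply is_lim_seq_const].
  destruct (pow_unbounded (INR n) xi) as [N HN]; [lra|].
  exists N; intros M hM.
  assert (Hpow : 0 < INR n ^ S M) by (apply pow_lt; lra).
  specialize (HN (S M) ltac:(lia)).
  replace (- (Z.of_nat M + 1))%Z with (- Z.of_nat (S M))%Z by lia.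
  unfold scaled_floor; rewrite powerRZ_neg', <- pow_powerRZ.
  rewrite <- (Int_part_spec _ 0); [simpl; ring|].
  split.
  - apply (Rmult_lt_reg_r (INR n ^ S M)); [exact Hpow|].
    rewrite Rmult_minus_distr_r, Rmult_assoc, Rinv_l; lra.
  - apply Rmult_le_pos; [exact hxi|left; apply Rinv_0_lt_compat, Hpow].
Qed.

End GreedyDigits.

Lemma digits_is_expansion (n : nat) (xi : R) :
  (2 <= n)%nat -> 0 <= xi -> is_expansion n xi (digits n xi).
Proof.
  intros hn hxi; unfold digits; apply epsilon_spec; exists (greedy_digits n xi).
  split; [|split].
  - apply greedy_digits_lt; lia.
  - apply greedy_digits_not_eventually_max; exact hn.
  - apply greedy_digits_series_cvg; assumption.
Qed.

Lemma digit_terms_nonneg (n : nat) (d : Z -> nat) (i : Z) :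
  (0 < n)%nat -> 0 <= digit_terms n d i.
Proof.
  intros hn; apply Rmult_le_pos; [apply pos_INR|].
  left; apply powerRZ_lt, (lt_INR 0); exact hn.
Qed.

Lemma digit_terms_le_compat (n : nat) (d d' : Z -> nat) (i : Z) :
  (0 < n)%nat -> (d i <= d' i)%nat -> digit_terms n d i <= digit_terms n d' i.
Proof.
  intros hn hd; apply Rmult_le_compat_r; [|apply le_INR, hd].
  left; apply powerRZ_lt, (lt_INR 0); exact hn.
Qed.

Section ShiftMap.

Variables (p q : nat) (d : Z -> nat).
Hypothesis hpq : (0 < p * q)%nat.

Let carry_terms : Z -> R := digit_terms (p * q) (fun j => d j / q)%nat.

Lemma G_digit_terms (i : Z) :
  digit_terms (p * q) (fun j => G p q (fun k => d (- k)%Z) (- j)) i =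
  INR p * digit_terms (p * q) d i + INR (p * q) * (carry_terms (i - 1) - carry_terms i).
Proof.
  unfold carry_terms, digit_terms, G, g.
  rewrite Z.opp_involutive; replace (- (- i + 1))%Z with (i - 1)%Z by lia.
  assert (Hpow : powerRZ (INR (p * q)) i = powerRZ (INR (p * q)) (i - 1) * INR (p * q)).
  { rewrite <- (powerRZ_1 (INR (p * q))) at 3.
    rewrite <- powerRZ_add by (apply not_0_INR; lia); f_equal; lia. }
  rewrite Hpow.
  rewrite (Nat.div_mod_eq (d i) q) at 2.
  rewrite !plus_INR, !mult_INR; ring.
Qed.

Lemma G_series_cvg (l : R) :
  is_lim_seq (zsum (digit_terms (p * q) d)) l ->
  is_lim_seq (zsum (digit_terms (p * q) (fun j => G p q (fun k => d (- k)%Z) (- j))))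
             (INR p * l).
Proof.
  intros Hl.
  apply (is_lim_seq_ext (fun M => INR p * zsum (digit_terms (p * q) d) M +
    INR (p * q) * (carry_terms (- Z.of_nat M - 1)%Z - carry_terms (Z.of_nat M)))).
  { intros M; rewrite (zsum_ext _ _ _ G_digit_terms), zsum_plus, !zsum_scal.
    rewrite (zsum_telescope (fun i => carry_terms (i - 1)%Z - carry_terms i)
                            (fun i => carry_terms (i - 1)%Z)), Z.add_simpl_r.
    - reflexivity.
    - intros i; rewrite Z.add_simpl_r; reflexivity. }
  destruct (zsum_cvg_terms_vanish _ _ (fun i => digit_terms_nonneg _ d i hpq) Hl)
    as [Hleft Hright].
  assert (Hcarry : forall i, 0 <= carry_terms i <= digit_terms (p * q) d i).
  { intros i; split; [apply digit_terms_nonneg, hpq|].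
    apply digit_terms_le_compat; [exact hpq|].
    apply Nat.Div0.div_le_upper_bound; destruct q; lia. }
  replace (INR p * l) with (INR p * l + INR (p * q) * (0 - 0)) by ring.
  apply is_lim_seq_plus'; [apply (is_lim_seq_scal_l _ _ l), Hl|].
  apply (is_lim_seq_scal_l _ _ (0 - 0)), is_lim_seq_minus'.
  - exact (is_lim_seq_squeeze_0 _ _ (fun M => Hcarry _) Hleft).
  - exact (is_lim_seq_squeeze_0 _ _ (fun M => Hcarry _) Hright).
Qed.

End ShiftMap.

Theorem lemma1 (p q : nat) (hp : (2 <= p)%nat) (hq : (2 <= q)%nat)
  (hpq : Nat.gcd p q = 1%nat) (xi : R) (hxi : 0 <= xi) :
  real_n (p * q) (G p q (config (p * q) xi)) = INR p * xi.
Proof.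
  assert (hn : (2 <= p * q)%nat) by nia.
  destruct (digits_is_expansion (p * q) xi hn hxi) as [_ [_ Hcvg]].
  unfold real_n, config.
  rewrite (is_lim_seq_unique _ _ (G_series_cvg p q _ ltac:(lia) xi Hcvg)).
  reflexivity.
Qed.
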